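(* For arbitrary $\bar x,\bar s\in\mathbb{R}^{n+1}_{++}$, the matrix $\nabla\psi(\bar x)+\mathrm{diag}(\bar s/\bar x)$ satisfies $d^\top\big(\nabla\psi(\bar x)+\mathrm{diag}(\bar s/\bar x)\big)d>0$ for all nonzero $d\in\mathbb{R}^{n+1}$; in particular it is nonsingular, so for every right-hand side the linear system with this matrix has a unique solution, and hence the Newton system (N) at any $(\bar x^k,\bar s^k)\in\mathbb{R}^{n+1}_{++}\times\mathbb{R}^{n+1}_{++}$ has a unique solution.
   Context: Let $Q\in\mathbb{R}^{n_z\times n_z}$ be symmetric positive semidefinite, $c\in\mathbb{R}^{n_z}$, $A\in\mathbb{R}^{n_b\times n_z}$, $b\in\mathbb{R}^{n_b}$, and $n=n_z+n_b$. Define $M=\begin{bmatrix}Q&-A^\top\\ A&0\end{bmatrix}$ and $q=\begin{bmatrix}c\\-b\end{bmatrix}$. For $\bar x=(x,\tau)\in\mathbb{R}^{n+1}_{++}$ define $\psi(\bar x)=\begin{bmatrix} Mx+q\tau\\ -x^\top Mx/\tau-x^\top q\end{bmatrix}$ and its Jacobian $\nabla\psi(\bar x)=\begin{bmatrix} M & q\\ -x^\top(M+M^\top)/\tau-q^\top & x^\top Mx/\tau^2\end{bmatrix}$. $\bar s/\bar x$ is componentwise division. Newton system (N): given $\bar x^k,\bar s^k\in\mathbb{R}^{n+1}_{++}$ and $\eta,\gamma\in(0,1)$, let $\bar r^k=\bar s^k-\psi(\bar x^k)$ and $\bar\mu^k=(\bar x^k)^\top\bar s^k/(n+1)$; $(d_{\bar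 x},d_{\bar s})$ solves (N) if $d_{\bar s}-\nabla\psi(\bar x^k)d_{\bar x}=-\eta\bar r^k$ and $\bar x^k\odot d_{\bar s}+\bar s^k\odot d_{\bar x}=\gamma\bar\mu^k e-\bar x^k\odot\bar s^k$ ($\odot$ componentwise product, $e$ all-ones vector). *)

From HB Require Import structures.
From mathcomp Require Import all_boot all_order all_algebra.
Set Implicit Arguments. Unset Strict Implicit. Unset Printing Implicit Defensive.
Import Order.TTheory GRing.Theory Num.Theory.
Local Open Scope ring_scope.

Section Defs.
Variable R : realFieldType.

Definition Mmat nz nb (Q : 'M[R]_nz) (A : 'M[R]_(nb, nz)) : 'M[R]_(nz + nb) :=
  block_mx Q (- A^T) A 0.

Definition qvec nz nb (c : 'cV[R]_nz) (b : 'cV[R]_nb) : 'cV[R]_(nz + nb) :=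
  col_mx c (- b).

Definition posvec m (v : 'cV[R]_m) : Prop := forall i, 0 < v i 0.

Definition xpart n (xb : 'cV[R]_(n + 1)) : 'cV[R]_n := usubmx xb.
Definition taupart n (xb : 'cV[R]_(n + 1)) : R := dsubmx xb 0 0.

Definition psi n (M : 'M[R]_n) (q : 'cV[R]_n) (xb : 'cV[R]_(n + 1)) : 'cV[R]_(n + 1) :=
  let x := xpart xb in let tau := taupart xb in
  col_mx (M *m x + tau *: q)
         ((- ((x^T *m M *m x) 0 0 / tau) - (x^T *m q) 0 0)%:M).

Definition gradpsi n (M : 'M[R]_n) (q : 'cV[R]_n) (xb : 'cV[R]_(n + 1)) : 'M[R]_(n + 1) :=
  let x := xpart xb in let tau := taupart xb in
  block_mx M q
           (- (tau^-1 *: (x^T *m (M + M^T))) - q^T)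
           (((x^T *m M *m x) 0 0 / tau ^+ 2)%:M).

Definition hadam m (u v : 'cV[R]_m) : 'cV[R]_m := \col_i (u i 0 * v i 0).
Definition cdiv m (u v : 'cV[R]_m) : 'cV[R]_m := \col_i (u i 0 / v i 0).

Definition diagc m (u : 'cV[R]_m) : 'M[R]_m := diag_mx u^T.

Definition newton_sys n (M : 'M[R]_n) (q : 'cV[R]_n) (eta gamma : R)
    (xk sk dx ds : 'cV[R]_(n + 1)) : Prop :=
  let rk := sk - psi M q xk in
  let muk := (xk^T *m sk) 0 0 / (n + 1)%:R in
  ds - gradpsi M q xk *m dx = - (eta *: rk) /\
  hadam xk ds + hadam sk dx = gamma * muk *: const_mx 1 - hadam xk sk.

End Defs.

From HB Require Import structures.
From mathcomp Require Import all_boot all_order all_algebra.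
From mathcomp Require Import ring.
Set Implicit Arguments.
Unset Strict Implicit.
Unset Printing Implicit Defensive.

Import Order.TTheory GRing.Theory Num.Theory.
Local Open Scope ring_scope.

(* Write d = (u, s).  The quadratic form of the bordered Jacobian at d is
   w^T M w with w = u - (s / tau) x: the q-terms cancel because q enters
   the last column and, transposed and negated, the last row, and the
   remaining three terms complete a square.  The quadratic form of M is
   that of Q, because the A-blocks are skew, hence it is nonnegative,
   while diag(s / x) contributes a strictly positive term for d != 0.  In
   the Newton system one eliminates d_s = grad psi d_x - eta r; what
   remains is diag(x) (grad psi + diag(s / x)) d_x = rhs, a product of two
   invertible matrices. *)

Lemma posdef_unitmx (R : numFieldType) m (J : 'M[R]_m) :
  (forall d : 'cV[R]_m, d != 0 -> 0 < (d^T *m J *m d) 0 0) -> J \in unitmx.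
Proof.
move=> J_posdef; rewrite unitmxE unitfE; apply/negP => /det0P[v v_neq0 vJ0].
have := J_posdef v^T; rewrite trmx_eq0 trmxK vJ0 mul0mx mxE ltxx.
by move/(_ v_neq0).
Qed.

Lemma unitmx_solve_uniq (R : fieldType) m (J : 'M[R]_m) (rhs : 'cV[R]_m) :
  J \in unitmx -> exists! d : 'cV[R]_m, J *m d = rhs.
Proof.
move=> J_unit; exists (invmx J *m rhs); split; first by rewrite mulKVmx.
by move=> d <-; rewrite mulKmx.
Qed.

(* Quadratic forms are expanded through the trace of 1 x 1 matrices, which
   (unlike the entry map) rewrites as an additive, homogeneous function;
   negations are turned into scalings by -1 for the same reason. *)
Lemma bordered_form (R : comPzRingType) n (M : 'M[R]_n) (a : 'cV[R]_n)
    (r : 'rV[R]_n) (c : R) (u : 'cV[R]_n) (s : R) :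
  ((col_mx u s%:M)^T *m block_mx M a r c%:M *m col_mx u s%:M) 0 0 =
  (u^T *m M *m u) 0 0 + s * ((u^T *m a) 0 0 + (r *m u) 0 0) + s ^+ 2 * c.
Proof.
rewrite tr_col_mx mul_row_block mul_row_col tr_scalar_mx !mul_scalar_mx.
rewrite !mul_mx_scalar mulmxDl -!scalemxAl -!trace_mx11 !(mxtraceD, mxtraceZ).
rewrite !trace_mx11 [_%:M _ _]mxE eqxx mulr1n.
ring.
Qed.

Lemma gradpsi_form (R : realFieldType) n (M : 'M[R]_n) (q : 'cV[R]_n)
    (xb : 'cV[R]_(n + 1)) (u : 'cV[R]_n) (s : R) :
  let w := u - (s / taupart xb) *: xpart xb in
  ((col_mx u s%:M)^T *m gradpsi M q xb *m col_mx u s%:M) 0 0 = (w^T *m M *m w) 0 0.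
Proof.
rewrite /gradpsi bordered_form; set x := xpart xb; set tau := taupart xb.
have -> : (u - (s / tau) *: x)^T = u^T - (s / tau) *: x^T by rewrite linearB linearZ.
rewrite !(mulmxBl, mulmxBr, mulmxDl, mulmxDr, mulNmx, mulmxN).
rewrite -?(scalemxAl, scalemxAr) mulmxDl.
rewrite -!(scaleN1r (_ : 'M_1)) -!trace_mx11 !(mxtraceD, mxtraceZ).
rewrite -[\tr (x^T *m M^T *m u)]mxtrace_tr -[\tr (q^T *m u)]mxtrace_tr.
rewrite !trmx_mul !trmxK mulmxA -exprVn.
ring.
Qed.

Lemma Mmat_form (R : realFieldType) nz nb (Q : 'M[R]_nz) (A : 'M[R]_(nb, nz))
    (w : 'cV[R]_(nz + nb)) :
  (w^T *m Mmat Q A *m w) 0 0 = ((usubmx w)^T *m Q *m usubmx w) 0 0.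
Proof.
rewrite -[w in LHS]vsubmxK /Mmat tr_col_mx mul_row_block mul_row_col.
rewrite !mulmx0 addr0 !mulmxDl mulmxN mulNmx -!trace_mx11 !linearD linearN /=.
rewrite -[in X in _ - X]mxtrace_tr !trmx_mul !trmxK mulmxA.
by rewrite addrK.
Qed.

Lemma diagc_form (R : realFieldType) m (e d : 'cV[R]_m) :
  (d^T *m diagc e *m d) 0 0 = \sum_i d i 0 ^+ 2 * e i 0.
Proof.
rewrite /diagc mul_mx_diag mxE; apply: eq_bigr => i _.
by rewrite !mxE mulrC mulrA -expr2.
Qed.

Lemma diagc_form_gt0 (R : realFieldType) m (e d : 'cV[R]_m) :
  posvec e -> d != 0 -> 0 < (d^T *m diagc e *m d) 0 0.
Proof.
move=> e_gt0 /cV0Pn[i di_neq0]; rewrite diagc_form (bigD1 i) //=.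
apply: ltr_pwDl; first by rewrite mulr_gt0 ?exprn_even_gt0.
by apply: sumr_ge0 => j _; rewrite mulr_ge0 ?sqr_ge0 ?ltW.
Qed.

Lemma posvec_cdiv (R : realFieldType) m (u v : 'cV[R]_m) :
  posvec u -> posvec v -> posvec (cdiv u v).
Proof. by move=> u_gt0 v_gt0 i; rewrite mxE divr_gt0. Qed.

Lemma diagc_unitmx (R : realFieldType) m (x : 'cV[R]_m) :
  posvec x -> diagc x \in unitmx.
Proof.
move=> x_gt0; rewrite unitmxE unitfE det_diag; apply/prodf_neq0 => i _.
by rewrite mxE lt0r_neq0.
Qed.

Lemma hadam_diagc (R : realFieldType) m (u v : 'cV[R]_m) :
  hadam u v = diagc u *m v.
Proof. by apply/matrixP => i j; rewrite /diagc mul_diag_mx !mxE ord1. Qed.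

Lemma diagc_mul_cdiv (R : realFieldType) m (x s : 'cV[R]_m) :
  posvec x -> diagc x *m diagc (cdiv s x) = diagc s.
Proof.
move=> x_gt0; rewrite /diagc mulmx_diag; congr diag_mx; apply/matrixP => i j.
by rewrite !mxE ord1 mulrCA mulfV ?mulr1 ?lt0r_neq0.
Qed.

Lemma gradpsi_diag_posdef (R : realFieldType) n (M : 'M[R]_n) (q : 'cV[R]_n)
    (xb sb : 'cV[R]_(n + 1)) :
  (forall w : 'cV[R]_n, 0 <= (w^T *m M *m w) 0 0) -> posvec xb -> posvec sb ->
  forall d : 'cV[R]_(n + 1), d != 0 ->
  0 < (d^T *m (gradpsi M q xb + diagc (cdiv sb xb)) *m d) 0 0.
Proof.
move=> M_psd xb_gt0 sb_gt0 d d_neq0; rewrite mulmxDr mulmxDl mxE.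
apply: ltr_wpDl; last exact: diagc_form_gt0 (posvec_cdiv sb_gt0 xb_gt0) d_neq0.
by rewrite -[d]vsubmxK [dsubmx d]mx11_scalar gradpsi_form; apply: M_psd.
Qed.

Lemma newton_sys_eliminate_ds (R : realFieldType) n (M : 'M[R]_n) (q : 'cV[R]_n)
    (eta gamma : R) (xk sk dx ds : 'cV[R]_(n + 1)) : posvec xk ->
  let G := gradpsi M q xk in
  let r := sk - psi M q xk in
  let w := gamma * ((xk^T *m sk) 0 0 / (n + 1)%:R) *: const_mx 1 - hadam xk sk in
  newton_sys M q eta gamma xk sk dx ds <->
  ds = G *m dx - eta *: r /\
  diagc xk *m (G + diagc (cdiv sk xk)) *m dx = w + eta *: (diagc xk *m r).
Proof.
move=> xk_gt0 G r w; rewrite /newton_sys -/G -/r -/w !hadam_diagc.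
rewrite mulmxDr mulmxDl diagc_mul_cdiv // -mulmxA.
have ds_eqE : (ds - G *m dx = - (eta *: r)) <-> (ds = G *m dx - eta *: r).
  by split=> [<- | ->]; [rewrite addrC subrK | rewrite addrAC subrr add0r].
split=> -[ds_eq newton_eq].
  have {}ds_eq := proj1 ds_eqE ds_eq; split=> //.
  by rewrite -newton_eq ds_eq mulmxBr -scalemxAr addrAC subrK.
split; first exact/ds_eqE.
by rewrite ds_eq mulmxBr -scalemxAr addrAC newton_eq addrK.
Qed.

Theorem mainTheorem9 (R : realFieldType) (nz nb : nat)
  (Q : 'M[R]_nz) (c : 'cV[R]_nz) (A : 'M[R]_(nb, nz)) (b : 'cV[R]_nb) :
  Q^T = Q ->
  (forall v : 'cV[R]_nz, 0 <= (v^T *m Q *m v) 0 0) ->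
  let M := Mmat Q A in
  let q := qvec c b in
  (forall xb sb : 'cV[R]_(nz + nb + 1), posvec xb -> posvec sb ->
     let J := gradpsi M q xb + diagc (cdiv sb xb) in
     (forall d : 'cV[R]_(nz + nb + 1), d != 0 -> 0 < (d^T *m J *m d) 0 0) /\
     J \in unitmx /\
     (forall rhs : 'cV[R]_(nz + nb + 1), exists! d : 'cV[R]_(nz + nb + 1), J *m d = rhs)) /\
  (forall (xk sk : 'cV[R]_(nz + nb + 1)) (eta gamma : R),
     posvec xk -> posvec sk -> 0 < eta < 1 -> 0 < gamma < 1 ->
     exists! p : 'cV[R]_(nz + nb + 1) * 'cV[R]_(nz + nb + 1),
       newton_sys M q eta gamma xk sk p.1 p.2).
Proof.
move=> _ Q_psd M q.
have M_psd (w : 'cV[R]_(nz + nb)) : 0 <= (w^T *m M *m w) 0 0 by rewrite Mmat_form.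
have J_unit xb sb : posvec xb -> posvec sb -> gradpsi M q xb + diagc (cdiv sb xb) \in unitmx.
  by move=> xb_gt0 sb_gt0; exact/posdef_unitmx/gradpsi_diag_posdef.
split=> [xb sb xb_gt0 sb_gt0 J | xk sk eta gamma xk_gt0 sk_gt0 _ _].
  split; first exact: gradpsi_diag_posdef.
  by split=> [|rhs]; [exact: J_unit | exact/unitmx_solve_uniq/J_unit].
have K_unit : diagc xk *m (gradpsi M q xk + diagc (cdiv sk xk)) \in unitmx.
  by rewrite unitmx_mul diagc_unitmx ?J_unit.
have [dx [Kdx dx_uniq]] := unitmx_solve_uniq
  ((gamma * ((xk^T *m sk) 0 0 / (nz + nb + 1)%:R) *: const_mx 1 - hadam xk sk)
   + eta *: (diagc xk *m (sk - psi M q xk))) K_unit.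
exists (dx, gradpsi M q xk *m dx - eta *: (sk - psi M q xk)).
have newtonE dx' ds' := newton_sys_eliminate_ds M q eta gamma sk dx' ds' xk_gt0.
by split=> [|[dx' ds'] /= /newtonE[-> /dx_uniq <-]] //; exact/newtonE.
Qed.
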